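(* Let $G$ be a graph with vertex set $\{0,\dots,n\}$ and sink $0$. The following are equivalent: (i) every SR state on $G$ is DR (so the sets of SR and DR states coincide); (ii) every minimal SR state on $G$ is DR; (iii) the induced subgraph $G(\{1,\dots,n\})$ obtained by deleting the sink and its incident edges contains no cycle (in particular no pair of vertices joined by a multiple edge).
   Context: A graph $G$ here is a finite, connected, undirected multigraph without loops with vertex set $\{0,1,\dots,n\}$; vertex $0$ is the sink. A configuration is $c\in\mathbb{Z}_{\ge0}^n$, stable if $c_i<\deg(i)$ for all $i\in[n]$. ASM: an unstable vertex topples by sending one grain along each incident edge (grains sent to the sink disappear). SSM (parameter $p\in(0,1)$): an unstable vertex $i$, independently for each incident edge, sends one grain along it with probability $p$, otherwise keeps it. Each model gives a Markov chain on stable configurations: add a grain at vertex $i$ with probability $\mu_i>0$, then stabilise. DR = recurrent for the ASM chain, SR = recurrent for the SSM chain. Minimal SR = minimal among SR states for the componentwise order. Known facts: a stable $c$ is SR iff there is a sink-rooted orientation $\mathcal{O}$ (sink is the unique vertex with all edges incoming) with $c_i\ge\mathrm{in}^{\mathcal{O}}_i$ for all $i\in[n]$, and DR iff such an orientation exists that is acyclic. *)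

From mathcomp Require Import all_boot.
From Stdlib Require Import Relations.
Set Implicit Arguments. Unset Strict Implicit. Unset Printing Implicit Defensive.

(* A multigraph on vertex set {0,...,n} = 'I_n.+1 is given by its
   multiplicity matrix  m i j  = number of edges between i and j.
   Vertex 0 (ord0) is the sink. *)
Section Sandpile.
Variable n : nat.
Notation V := 'I_n.+1.
Variable m : V -> V -> nat.

Definition sink : V := ord0.

Definition adj : rel V := [rel a b | 0 < m a b].
Definition is_graph : Prop :=
  (forall i j, m i j = m j i) /\ (forall i, m i i = 0) /\
  (forall i j, connect adj i j).

Definition deg (i : V) : nat := \sum_(j : V) m i j.

(* configurations: functions V -> nat vanishing at the sink
   (i.e. elements of Z_{>=0}^n, coordinates indexed by 1..n) *)
Definition config := V -> nat.

Definition stable (c : config) : Prop :=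
  c sink = 0 /\ forall i : V, i != sink -> c i < deg i.

(* vertex i (non-sink, unstable) sends k j grains along its edges to j,
   with k j <= m i j; grains sent to the sink disappear. *)
Definition topple_by (c : config) (i : V) (k : V -> nat) : config :=
  fun j => if j == sink then 0
           else if j == i then c i - \sum_(l : V) k l
           else c j + k j.

Definition asm_topple (c c' : config) : Prop :=
  exists i : V, [/\ i != sink, deg i <= c i & c' = topple_by c i (m i)].

(* SSM toppling (with positive probability, p in (0,1)): for each incident
   edge, independently, one grain is sent or kept; any choice of the set of
   sending edges has positive probability. *)
Definition ssm_topple (c c' : config) : Prop :=
  exists i : V, [/\ i != sink, deg i <= c i &
    exists k : V -> nat, (forall j, k j <= m i j) /\ c' = topple_by c i k].

Definition add_grain (c : config) (i : V) : config :=
  fun j => if j == i then (c j).+1 else c j.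

(* one step of the Markov chain (positive probability transitions):
   add a grain at a non-sink vertex i (mu_i > 0), then stabilise. *)
Definition chain_step (T : relation config) (c c' : config) : Prop :=
  stable c /\ exists i : V, [/\ i != sink,
     clos_refl_trans config T (add_grain c i) c' & stable c'].

(* recurrent state of the finite chain: every state reachable from c
   can reach c back. *)
Definition recurrent (T : relation config) (c : config) : Prop :=
  stable c /\ forall c', clos_refl_trans config (chain_step T) c c' ->
                         clos_refl_trans config (chain_step T) c' c.

Definition DR := recurrent asm_topple.
Definition SR := recurrent ssm_topple.

Definition minimal_SR (c : config) : Prop :=
  SR c /\ forall c', SR c' -> (forall i, c' i <= c i) -> c' = c.

Definition nonsink_acyclic : Prop :=
  (forall i j : V, i != sink -> j != sink -> m i j <= 1) /\
  (forall s : seq V, uniq s -> 3 <= size s -> sink \notin s ->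
      ~~ cycle adj s).

End Sandpile.

From mathcomp Require Import all_boot zify.
From Stdlib Require Import Relations FunctionalExtensionality Lia.
Set Implicit Arguments. Unset Strict Implicit. Unset Printing Implicit Defensive.

(* A stable state is recurrent iff it is reachable from the maximal stable
   state, which every stable state reaches by adding grains.  An SSM toppling
   can be followed by a reorientation of the edges at the toppled vertex, so
   every SR state dominates the in-degree vector of an orientation with all sink
   edges incoming.  Conversely, the in-degree vector of a sink-rooted
   orientation is SR (add grains in order of decreasing distance to the sink and
   route the surplus to the sink), and it is minimal since all such in-degree
   vectors have the same sum.  DR states pass Dhar's burning test, and stable
   states that pass it are DR by the burning algorithm and the abelian property
   of the ASM.  A double edge or a cycle away from the sink can be oriented
   cyclically, which yields a minimal SR state failing the burning test.  If the
   non-sink part is a forest, an orientation dominated by a state leaves in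
   every nonempty set of non-sink vertices a vertex with no out-edge inside the
   set, and that vertex burns. *)

Lemma clos_rt_invariant (A : Type) (R : relation A) (P : A -> Prop) :
  (forall x y, R x y -> P x -> P y) ->
  forall x y, clos_refl_trans A R x y -> P x -> P y.
Proof.
by move=> HR x y; elim=> [a b /HR|//|a b c _ IH1 _ IH2 /IH1 /IH2].
Qed.

Lemma clos_rt_map (A : Type) (R : relation A) (f : A -> A) :
  (forall x y, R x y -> R (f x) (f y)) ->
  forall x y, clos_refl_trans A R x y -> clos_refl_trans A R (f x) (f y).
Proof.
move=> HR x y; elim=> [a b /HR|a|a b c _ IH1 _ IH2];
  [exact: rt_step|exact: rt_refl|exact: rt_trans IH1 IH2].
Qed.

Lemma connect_exit (T : finType) (e : rel T) (A : {set T}) a b :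
  connect e a b -> a \in A -> b \notin A ->
  exists u w, [/\ u \in A, w \notin A & e u w].
Proof.
case/connectP=> p; elim: p a => [|c p IH] a /=; first by move=> _ -> ->.
case/andP=> e_ac e_p b_last a_A; have [c_A|c_notA] := boolP (c \in A).
  exact: IH e_p b_last c_A.
by exists a, c.
Qed.

Lemma fcycle_orbit_iter (T : finType) (f : T -> T) x :
  exists i, fcycle f (orbit f (iter i f x)).
Proof.
have /trajectP [i lt_i_ord iter_order] := looping_order f x.
exists i; apply/(orbitPcycle 0 3); exists (fingraph.order f x - i).-1.
by rewrite prednK ?subn_gt0 // -iterD subnK ?(ltnW lt_i_ord).
Qed.

Lemma leq_sum_eq (I : finType) (P : pred I) (a b : I -> nat) :
  (forall i, P i -> a i <= b i) -> \sum_(i | P i) b i <= \sum_(i | P i) a i ->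
  forall i, P i -> a i = b i.
Proof.
move=> le_ab le_sum i Pi; apply/eqP; rewrite eqn_leq le_ab //=.
apply: contraLR le_sum; rewrite -!ltnNge => lt_ba.
rewrite (bigD1 i) //= [X in _ < X](bigD1 i) //= -addSn leq_add //.
by apply: leq_sum => j /andP [Pj _]; apply: le_ab.
Qed.

Lemma sum_gt0_exists (T : finType) (A : {set T}) (f : T -> nat) :
  0 < \sum_(w in A) f w -> exists2 w, w \in A & 0 < f w.
Proof.
by rewrite lt0n sum_nat_eq0 => /forall_inPn [w w_A f_w]; exists w; rewrite // lt0n.
Qed.

Lemma sum_notin_setD1 (T : finType) (A : {set T}) u (g : T -> nat) : u \in A ->
  \sum_(w | w \notin A :\ u) g w = g u + \sum_(w | w \notin A) g w.
Proof.
move=> u_A; rewrite (bigD1 u) ?inE ?eqxx //=; congr (_ + _); apply: eq_bigl => w.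
by rewrite !inE negb_and negbK; case: eqP => [->|_] /=; rewrite ?u_A ?andbT.
Qed.

Lemma next_next (T : eqType) (s : seq T) a : uniq s -> 2 < size s -> a \in s ->
  next s (next s a) != a.
Proof.
move=> s_uniq s_size a_s; have [i p def_s] := rot_to a_s.
have p_uniq : uniq (a :: p) by rewrite -def_s rot_uniq.
have p_size : 2 < size (a :: p) by rewrite -def_s size_rot.
rewrite -!(next_rot i s_uniq) def_s.
case: p {def_s} p_uniq p_size => [|b [|c r]] //= /andP [a_p _] _.
have /negbTE ba : b != a by apply: contraNneq a_p => ->; rewrite inE eqxx.
rewrite /next /= eqxx /= ba eqxx /=.
by apply: contraNneq a_p => ->; rewrite !inE eqxx orbT.
Qed.

Section Sandpile.
Variable n : nat.
Local Notation V := 'I_n.+1.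
Variable m : V -> V -> nat.
Hypothesis m_sym : forall i j, m i j = m j i.
Hypothesis m_loop : forall i, m i i = 0.
Hypothesis m_connect : forall i j, connect (adj m) i j.
Local Notation sink := (sink n).
Local Notation deg := (deg m).
Local Notation stable := (stable m).
Local Notation reach T := (clos_refl_trans (config n) (chain_step m T)).

Definition grow (S : {set V}) : {set V} :=
  S :|: [set v | [exists w in S, adj m w v]].
Definition ball k : {set V} := iter k grow [set sink].

Lemma ball_path p x k : path (adj m) x p -> x \in ball k ->
  last x p \in ball (k + size p).
Proof.
elim: p x k => [|y p IH] x k /=; first by rewrite addn0.
case/andP=> xy p_path x_in; rewrite addnS -addSn; apply: IH => //.
by rewrite /ball iterS in_setU inE; apply/orP; right; apply/existsP; exists x; rewrite x_in.
Qed.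

Lemma ball_exists u : exists k, u \in ball k.
Proof.
have /connectP [p p_path ->] := m_connect sink u.
by exists (0 + size p); apply: ball_path => //; rewrite inE.
Qed.

Definition rank u := ex_minn (ball_exists u).

Lemma rank_min u k : u \in ball k -> rank u <= k.
Proof. by rewrite /rank; case: ex_minnP => k0 _; apply. Qed.

Lemma mem_ball_rank u : u \in ball (rank u).
Proof. by rewrite /rank; case: ex_minnP. Qed.

Lemma rank_sink : rank sink = 0.
Proof. by apply/eqP; rewrite -leqn0; apply: rank_min; rewrite inE. Qed.

Lemma exists_parent u : u != sink ->
  exists w, (0 < m u w) && (rank w < rank u).
Proof.
move=> u_ns; move: (mem_ball_rank u) (@rank_min u).
case: (rank u) => [|k]; first by rewrite inE (negbTE u_ns).
rewrite /ball iterS -/(ball k) in_setU => /orP [/[swap] /[apply]|]; first by rewrite ltnn.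
rewrite inE => /existsP [w /andP [w_in wu]] _; exists w.
by rewrite m_sym; apply/andP; split; [exact: wu|rewrite ltnS rank_min].
Qed.

Definition parent u := odflt sink [pick w | (0 < m u w) && (rank w < rank u)].

Lemma parentP u : u != sink -> (0 < m u (parent u)) && (rank (parent u) < rank u).
Proof.
move=> /exists_parent [w Pw]; rewrite /parent; case: pickP => [//|none].
by rewrite none in Pw.
Qed.

Lemma parent_neq u : u != sink -> u != parent u.
Proof. by case/parentP/andP => _; apply: contraTneq => <-; rewrite ltnn. Qed.

Lemma deg_gt0 u : u != sink -> 0 < deg u.
Proof.
case/parentP/andP => m_up _; apply: leq_trans m_up _.
by rewrite /deg (bigD1 (parent u)) //= leq_addr.
Qed.

Definition max_stable : config n :=
  fun u => if u == sink then 0 else (deg u).-1.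

Lemma max_stable_stable : stable max_stable.
Proof.
split=> [|u u_ns]; first by rewrite /max_stable eqxx.
by rewrite /max_stable (negbTE u_ns) prednK // deg_gt0.
Qed.

Definition deficit (c : config n) := \sum_(u : V) ((deg u).-1 - c u).

Lemma add_grain_sink c i : i != sink -> add_grain c i sink = c sink.
Proof. by rewrite /add_grain eq_sym => /negbTE ->. Qed.

Lemma reach_max_stable T c : stable c -> reach T c max_stable.
Proof.
have [k] := ubnP (deficit c); elim: k c => // k IH c; rewrite ltnS => def_c [c0 c_lt].
have [/existsP [u /andP [u_ns lt_cu]]|] :=
  boolP [exists u, (u != sink) && (c u < (deg u).-1)].
  have stable_c' : stable (add_grain c u).
    split=> [|v v_ns]; first by rewrite add_grain_sink.
    rewrite /add_grain; case: eqP => [->|_]; last exact: c_lt.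
    by rewrite -ltn_predRL.
  apply: rt_trans (IH _ _ stable_c').
    by apply: rt_step; split=> //; exists u; split=> //; apply: rt_refl.
  apply: leq_trans def_c; rewrite /deficit (bigD1 u) //= [X in _ < X](bigD1 u) //=.
  rewrite /add_grain eqxx -addSn leq_add ?subnS ?prednK ?subn_gt0 //.
  by apply: eq_leq; apply: eq_bigr => v /negbTE ->.
rewrite negb_exists => /forallP c_max.
have -> : c = max_stable; last exact: rt_refl.
apply: functional_extensionality => u; rewrite /max_stable.
case: eqP => [->//|/eqP u_ns]; move: (c_max u) (c_lt u u_ns).
by rewrite u_ns /= -leqNgt; lia.
Qed.

Lemma reach_stable T c c' : reach T c c' -> stable c -> stable c'.
Proof. by apply: (clos_rt_invariant (P := stable)) => x y [_ [i [_ _ st_y]]]. Qed.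

Lemma recurrentP T c : recurrent m T c <-> stable c /\ reach T max_stable c.
Proof.
split=> [[c_st c_rec]|[c_st c_reach]]; first by split=> //; apply/c_rec/reach_max_stable.
split=> // c' c_c'; apply: rt_trans c_reach.
exact/reach_max_stable/(reach_stable c_c').
Qed.

Lemma recurrent_invariant T (P : config n -> Prop) c :
  (forall x i, i != sink -> P x -> P (add_grain x i)) ->
  (forall x y, T x y -> P x -> P y) -> P max_stable ->
  recurrent m T c -> P c.
Proof.
move=> P_add P_T P_max /recurrentP [_ reach_c]; apply: (clos_rt_invariant _ reach_c P_max).
by move=> x y [_ [i [i_ns /(clos_rt_invariant P_T) P_xy _]]] /(P_add _ _ i_ns).
Qed.

Definition orientation (o : V -> V -> nat) :=
  [/\ forall u w, u != w -> o u w + o w u = m u w,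
      forall u, o u u = 0 & forall u, o sink u = 0].

Definition indeg (o : V -> V -> nat) u := \sum_(w : V) o w u.
Definition outdeg (o : V -> V -> nat) u := \sum_(w : V) o u w.
Definition sink_rooted (o : V -> V -> nat) := forall u, u != sink -> 0 < outdeg o u.

Lemma orientation_le o u w : orientation o -> o u w <= m u w.
Proof.
case=> o_sum o_loop _; have [->|uw] := eqVneq u w; first by rewrite o_loop.
by rewrite -(o_sum _ _ uw) leq_addr.
Qed.

Lemma indeg_add_outdeg o u : orientation o -> indeg o u + outdeg o u = deg u.
Proof.
case=> o_sum o_loop _; rewrite /indeg /outdeg /deg -big_split /=.
apply: eq_bigr => w _; have [->|uw] := eqVneq u w; first by rewrite o_loop m_loop.
by rewrite addnC o_sum.
Qed.

Lemma indeg_sink o : orientation o -> indeg o sink = \sum_(w : V) m w sink.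
Proof.
case=> o_sum o_loop o_sink; apply: eq_bigr => w _.
have [->|w_ns] := eqVneq w sink; first by rewrite o_loop m_loop.
by rewrite -(o_sum _ _ w_ns) o_sink addn0.
Qed.

(* Each edge contributes once to the total in-degree, and the edges at the
   sink are oriented into it, so the non-sink in-degrees have a fixed sum. *)
Lemma sum_indeg_nonsink o o' : orientation o -> orientation o' ->
  \sum_(u | u != sink) indeg o u = \sum_(u | u != sink) indeg o' u.
Proof.
have in_out q : \sum_(u : V) indeg q u = \sum_(u : V) outdeg q u by apply: exchange_big.
have sum_indeg q : orientation q ->
    \sum_(u : V) indeg q u + \sum_(u : V) indeg q u = \sum_(u : V) deg u.
  move=> q_or; rewrite {2}in_out -big_split /=.
  by apply: eq_bigr => u _; apply: indeg_add_outdeg.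
move=> o_or o'_or; have : \sum_(u : V) indeg o u = \sum_(u : V) indeg o' u.
  by have := sum_indeg _ o_or; rewrite -(sum_indeg _ o'_or); lia.
rewrite (bigD1 sink) //= (bigD1 sink (P := xpredT)) //= !indeg_sink //.
exact: addnI.
Qed.

Definition rank_orientation u w :=
  if (rank w < rank u) || ((rank w == rank u) && (w < u)) then m u w else 0.

Lemma rank_orientation_orientation : orientation rank_orientation.
Proof.
split=> [u w uw|u|u]; rewrite /rank_orientation.
- case: (ltngtP (rank w) (rank u)) => _ /=; first by rewrite addn0.
    by rewrite add0n m_sym.
  case: (ltngtP w u) => [_|_|/val_inj wu]; first by rewrite addn0.
    by rewrite add0n m_sym.
  by rewrite wu eqxx in uw.
- by rewrite !ltnn eqxx andbF.
- by rewrite rank_sink ltn0 /=; case: eqP => //= _; rewrite ltn0.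
Qed.

Lemma rank_orientation_sink_rooted : sink_rooted rank_orientation.
Proof.
move=> u /parentP /andP [m_up rank_up].
rewrite /outdeg (bigD1 (parent u)) //= {1}/rank_orientation rank_up.
exact: leq_trans m_up (leq_addr _ _).
Qed.

Definition indeg_dominated (c : config n) :=
  exists2 o, orientation o & forall u, u != sink -> indeg o u <= c u.

Lemma indeg_dominated_add_grain c i : indeg_dominated c -> indeg_dominated (add_grain c i).
Proof.
case=> o o_or o_le; exists o => // u /o_le le_u; apply: leq_trans le_u _.
by rewrite /add_grain; case: ifP.
Qed.

Lemma indeg_dominated_max_stable : indeg_dominated max_stable.
Proof.
exists rank_orientation => [|u u_ns]; first exact: rank_orientation_orientation.
rewrite /max_stable (negbTE u_ns) -(indeg_add_outdeg u rank_orientation_orientation).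
move: (rank_orientation_sink_rooted u_ns); case: outdeg => // k _.
by rewrite addnS leq_addr.
Qed.

Section Reorient.
Variables (o : V -> V -> nat) (i : V) (k : V -> nat).
Hypotheses (o_or : orientation o) (i_ns : i != sink) (k_le : forall j, k j <= m i j).

(* When [i] sends [k j] grains to [j], point [k j] of the edges [ij] to [j] and
   the others to [i]; all sink edges point to the sink. *)
Definition reorient a b :=
  if a == i then (if b == sink then m i sink else k b)
  else if b == i then (if a == sink then 0 else m i a - k a) else o a b.

Lemma k_self : k i = 0.
Proof. by apply/eqP; rewrite -leqn0 -(m_loop i) k_le. Qed.

Lemma reorient_orientation : orientation reorient.
Proof.
case: o_or => o_sum o_loop o_sink; rewrite /reorient.
split=> [a b|a|a]; last 2 first.
- by case: eqP => [->|_]; [rewrite (negbTE i_ns) k_self|rewrite o_loop].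
- by rewrite eq_sym (negbTE i_ns) eqxx; case: ifP.
have [->|ai] := eqVneq a i => ab.
  rewrite [b == i]eq_sym (negbTE ab); case: eqP => [->|_]; first by rewrite addn0.
  by rewrite subnKC.
have [->|bi] := eqVneq b i; last by rewrite o_sum.
case: eqP => [->|_]; first by rewrite m_sym.
by rewrite subnK // m_sym.
Qed.

Lemma indeg_reorient_at : indeg reorient i + \sum_(l : V) k l <= deg i.
Proof.
rewrite /indeg /reorient (bigD1 sink) //= [sink == i]eq_sym (negbTE i_ns) eqxx add0n.
rewrite /deg [X in _ <= X](bigD1 sink) //= (bigD1 sink (P := xpredT)) //=.
rewrite addnCA -big_split /= leq_add ?k_le //.
apply: leq_sum => w w_ns; rewrite (negbTE w_ns).
by case: eqP => [->|_]; rewrite ?k_self ?m_loop ?subnK.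
Qed.

Lemma indeg_reorient_other u : u != i -> u != sink -> indeg reorient u <= indeg o u + k u.
Proof.
move=> ui u_ns; rewrite /indeg (bigD1 i) //= [X in _ <= X + _](bigD1 i) //=.
rewrite /reorient eqxx (negbTE u_ns) (negbTE ui) [X in _ <= X]addnC leq_add2l.
apply: leq_trans (leq_addl _ _); apply: eq_leq.
by apply: eq_bigr => w /negbTE ->.
Qed.

End Reorient.

Lemma indeg_dominated_ssm c c' :
  ssm_topple m c c' -> indeg_dominated c -> indeg_dominated c'.
Proof.
case=> i [i_ns deg_le [k [k_le ->]]] [o o_or o_le].
exists (reorient o i k) => [|u u_ns]; first exact: reorient_orientation.
rewrite /topple_by (negbTE u_ns); have [->|ui] := eqVneq u i.
  have := indeg_reorient_at o i_ns k_le; lia.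
by apply: leq_trans (indeg_reorient_other o k ui u_ns) _; rewrite leq_add2r o_le.
Qed.

Lemma SR_indeg_dominated c : SR m c -> indeg_dominated c.
Proof.
apply: recurrent_invariant indeg_dominated_max_stable.
  by move=> x i _; apply: indeg_dominated_add_grain.
exact: indeg_dominated_ssm.
Qed.


Definition addc (x : config n) (e : V -> nat) : config n := fun u => x u + e u.

Definition delta (a : V) : V -> nat := fun w => (w == a) && (a != sink).

Lemma delta_sink : delta sink = fun=> 0.
Proof. by apply: functional_extensionality => w; rewrite /delta eqxx andbF. Qed.

Lemma addc0 x : addc x (fun=> 0) = x.
Proof. by apply: functional_extensionality => u; rewrite /addc addn0. Qed.

Lemma addcA x e f : addc (addc x e) f = addc x (fun w => e w + f w).
Proof. by apply: functional_extensionality => u; rewrite /addc addnA. Qed.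

Lemma topple_by_addc x i k f : \sum_(l : V) k l <= x i -> f sink = 0 ->
  topple_by (addc x f) i k = addc (topple_by x i k) f.
Proof.
move=> k_le f_sink; apply: functional_extensionality => u; rewrite /topple_by /addc.
by case: eqP => [->|_]; [rewrite f_sink|case: eqP => [->|//]; lia].
Qed.

Lemma ssm_topple_addc x y f : f sink = 0 ->
  ssm_topple m x y -> ssm_topple m (addc x f) (addc y f).
Proof.
move=> f_sink [i [i_ns deg_le [k [k_le ->]]]]; exists i; split=> //.
  by apply: leq_trans deg_le _; rewrite /addc leq_addr.
exists k; split=> //; rewrite topple_by_addc //; apply: leq_trans deg_le.
by apply: leq_sum => l _; apply: k_le.
Qed.

Lemma sum_delta u : u != sink -> \sum_(w : V) delta u w = 1.
Proof.
by move=> u_ns; rewrite (bigD1 u) //= /delta eqxx u_ns big1 // => w /negbTE ->.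
Qed.

Lemma grains_ind (P : (V -> nat) -> Prop) : P (fun=> 0) ->
  (forall u e, u != sink -> e sink = 0 -> P e -> P (fun w => delta u w + e w)) ->
  forall e, e sink = 0 -> P e.
Proof.
move=> P0 P_delta e; have [N] := ubnP (\sum_(u : V) e u).
elim: N e => // N IH e; rewrite ltnS => sum_e e_sink.
case: (pickP (fun u => 0 < e u)) => [u e_u|e0]; last first.
  by have -> : e = fun=> 0 by apply: functional_extensionality => w; move: (e0 w); lia.
have u_ns : u != sink by apply: contraTneq e_u => ->; rewrite e_sink.
pose e' w := e w - delta u w.
have e_split : e = fun w => delta u w + e' w.
  apply: functional_extensionality => w; rewrite /e' /delta u_ns andbT.
  by case: eqP => [->|_] /=; lia.
have e'_sink : e' sink = 0 by rewrite /e' e_sink.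
rewrite e_split; apply: (P_delta _ _ u_ns e'_sink (IH _ _ e'_sink)).
by move: sum_e; rewrite e_split big_split /= sum_delta.
Qed.

Section Routing.
Variables (U : {set V}) (z : config n).
Hypotheses (sink_notin_U : sink \notin U)
  (parent_U : forall u, u \in U -> (parent u \in U) || (parent u == sink))
  (z_sink : z sink = 0) (z_U : forall u, u \in U -> z u = (deg u).-1).

(* A grain on a vertex of [U] is passed from parent to parent down to the sink. *)
Lemma route_grain u : u \in U -> clos_refl_trans _ (ssm_topple m) (addc z (delta u)) z.
Proof.
have [r] := ubnP (rank u); elim: r u => // r IH u; rewrite ltnS => rank_u u_U.
have u_ns : u != sink by apply: contraNneq sink_notin_U => <-.
have /andP [m_up rank_up] := parentP u_ns.
have /negbTE u_pu := parent_neq u_ns.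
have step : ssm_topple m (addc z (delta u)) (addc z (delta (parent u))).
  exists u; split=> //.
    by rewrite /addc /delta eqxx u_ns z_U // addn1 prednK // deg_gt0.
  exists (fun w => (w == parent u) : nat); split=> [w|].
    by case: eqP => [->|].
  apply: functional_extensionality => w; rewrite /topple_by /addc /delta.
  rewrite (bigD1 (parent u)) //= eqxx big1 => [|l /negbTE -> //].
  case: (eqVneq w sink) => [->|w_ns]; first by rewrite z_sink eq_sym andbN.
  case: (eqVneq w u) => [->|wu]; first by rewrite u_pu u_ns eqxx /= addn0 addnK.
  by rewrite /= addn0; case: (w =P parent u) => [<-|]; rewrite ?w_ns.
apply: rt_trans (rt_step _ _ _ _ step) _.
have [pu_sink|pu_ns] := eqVneq (parent u) sink.
  by rewrite pu_sink delta_sink addc0; apply: rt_refl.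
apply: IH; first exact: leq_trans rank_up rank_u.
by move: (parent_U u_U); rewrite (negbTE pu_ns) orbF.
Qed.

Lemma route_grains e : (forall u, u \notin U -> e u = 0) ->
  clos_refl_trans _ (ssm_topple m) (addc z e) z.
Proof.
move=> e_U; have e_sink := e_U _ sink_notin_U; move: e e_sink e_U; apply: grains_ind.
  by rewrite addc0 => _; apply: rt_refl.
move=> u e u_ns _ IH e_U.
have u_U : u \in U by apply: contraT => /e_U; rewrite /delta eqxx u_ns.
rewrite -addcA; apply: rt_trans (IH _).
  apply: (clos_rt_map (f := addc^~ e)); last exact: route_grain.
  by move=> x y; apply: ssm_topple_addc; move: (e_U _ sink_notin_U); lia.
by move=> w /e_U; lia.
Qed.

End Routing.

Section IndegConfig.
Variable o : V -> V -> nat.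
Hypotheses (o_or : orientation o) (o_root : sink_rooted o).

Definition indeg_config : config n := fun u => if u == sink then 0 else indeg o u.

Lemma indeg_lt_deg u : u != sink -> indeg o u < deg u.
Proof. by move/o_root => out_u; rewrite -(indeg_add_outdeg u o_or) -addn1 leq_add2l. Qed.

Definition unprocessed (Q : {set V}) := [set u | (u != sink) && (u \notin Q)].

Definition partial_indeg_config (Q : {set V}) : config n := fun u =>
  if u == sink then 0 else if u \in Q then \sum_(w in Q) o w u else (deg u).-1.

Lemma partial_indeg_config_stable Q : stable (partial_indeg_config Q).
Proof.
split=> [|u u_ns]; first by rewrite /partial_indeg_config eqxx.
rewrite /partial_indeg_config (negbTE u_ns); case: ifP => _; last first.
  by rewrite prednK // deg_gt0.
apply: leq_ltn_trans (indeg_lt_deg u_ns).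
by rewrite /indeg [X in _ <= X](bigID (mem Q)) leq_addr.
Qed.

(* [v] keeps one grain per edge coming from [Q], and sends [o v w] grains to
   each [w] in [Q] and all its grains to the other vertices. *)
Lemma ssm_topple_partial_indeg_config (Q : {set V}) v : v \notin Q -> v != sink ->
  ssm_topple m (add_grain (partial_indeg_config Q) v)
    (addc (partial_indeg_config (v |: Q))
          (fun w => if w \in unprocessed (v |: Q) then m v w else 0)).
Proof.
move=> v_Q v_ns; pose k w := if w \in Q then o v w else m v w.
have [o_sum o_loop _] := o_or.
have sum_k : \sum_(w : V) k w + \sum_(w in Q) o w v = deg v.
  rewrite /deg (bigID (mem Q)) /= [X in _ = X](bigID (mem Q)) /=.
  rewrite addnAC -big_split /=; congr (_ + _).
    by apply: eq_bigr => w w_Q; rewrite /k w_Q o_sum //; apply: contraNneq v_Q => ->.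
  by apply: eq_bigr => w /negbTE w_Q; rewrite /k w_Q.
exists v; split=> //.
  by rewrite /add_grain eqxx /partial_indeg_config (negbTE v_ns) (negbTE v_Q) prednK ?deg_gt0.
exists k; split=> [w|]; first by rewrite /k; case: ifP => // _; apply: orientation_le.
apply: functional_extensionality => u.
rewrite /topple_by /addc /partial_indeg_config /add_grain /unprocessed.
have [->|u_ns] := eqVneq u sink; first by rewrite inE eqxx.
have [->|uv] := eqVneq u v.
  rewrite !inE eqxx /= (negbTE v_ns) (negbTE v_Q) andbF addn0 prednK ?deg_gt0 //.
  by rewrite -sum_k addKn (big_setU1 _ v_Q) /= o_loop.
rewrite !inE (negbTE uv) (negbTE u_ns) /=.
case: ifP => u_Q /=; last by rewrite /k u_Q.
by rewrite addn0 (big_setU1 _ v_Q) /= addnC /k u_Q.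
Qed.

(* The grains sent outside [v |: Q] are routed to the sink, since the parents
   of unprocessed vertices are unprocessed. *)
Lemma partial_indeg_config_step (Q : {set V}) v :
  sink \notin Q -> v \notin Q -> v != sink ->
  (forall u, u != sink -> u \notin Q -> u != v -> (parent u \notin Q) && (parent u != v)) ->
  chain_step m (ssm_topple m) (partial_indeg_config Q) (partial_indeg_config (v |: Q)).
Proof.
move=> sink_Q v_Q v_ns parent_out; split; first exact: partial_indeg_config_stable.
exists v; split=> //; last exact: partial_indeg_config_stable.
apply: rt_trans (rt_step _ _ _ _ (ssm_topple_partial_indeg_config v_Q v_ns)) _.
apply: (route_grains (U := unprocessed (v |: Q))).
- by rewrite inE eqxx.
- move=> u; rewrite !inE negb_or => /and3P [u_ns uv u_Q].
  have /andP [pu_Q pu_v] := parent_out u u_ns u_Q uv.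
  have [->|pu_ns] := eqVneq (parent u) sink; first by rewrite orbT.
  by rewrite negb_or pu_v pu_Q.
- by rewrite /partial_indeg_config eqxx.
- move=> u; rewrite inE => /andP [u_ns u_Q].
  by rewrite /partial_indeg_config (negbTE u_ns) (negbTE u_Q).
- by move=> u /negbTE ->.
Qed.

Lemma partial_indeg_config_full (Q : {set V}) : sink \notin Q ->
  (forall u, u != sink -> u \in Q) -> partial_indeg_config Q = indeg_config.
Proof.
move=> sink_Q all_Q; apply: functional_extensionality => u.
rewrite /partial_indeg_config /indeg_config; case: ifP => // /negbT u_ns.
rewrite all_Q // /indeg [X in _ = X](bigID (mem Q)) /= [X in _ = _ + X]big1 ?addn0 // => w w_Q.
have -> : w = sink by apply/eqP; apply: contraNT w_Q => /all_Q.
by case: o_or.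
Qed.

(* Vertices are added in order of decreasing rank, so that the parent of an
   unprocessed vertex is never processed. *)
Lemma reach_indeg_config (Q : {set V}) : sink \notin Q ->
  (forall q u, q \in Q -> u != sink -> u \notin Q -> rank u <= rank q) ->
  reach (ssm_topple m) (partial_indeg_config Q) indeg_config.
Proof.
have [N] := ubnP #|unprocessed Q|.
elim: N Q => // N IH Q; rewrite ltnS => card_Q sink_Q rank_Q.
have [rest0|/set0Pn [u0]] := eqVneq (unprocessed Q) set0.
  rewrite partial_indeg_config_full //; first exact: rt_refl.
  by move=> u u_ns; apply: contraT => u_Q; move/setP: rest0 => /(_ u); rewrite !inE u_ns u_Q.
rewrite inE => u0_P.
have [v /andP [v_ns v_Q] v_max] :=
  @arg_maxnP _ u0 (fun u => (u != sink) && (u \notin Q)) rank u0_P.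
apply: rt_trans (rt_step _ _ _ _ (partial_indeg_config_step sink_Q v_Q v_ns _)) _.
  move=> u u_ns u_Q uv; have /andP [_ rank_pu] := parentP u_ns.
  have rank_uv : rank u <= rank v by apply: v_max; rewrite u_ns u_Q.
  apply/andP; split; apply: contraTN rank_pu; last by move/eqP ->; rewrite -leqNgt.
  by move=> pu_Q; rewrite -leqNgt rank_Q.
apply: IH.
- apply: leq_trans card_Q; apply: proper_card; apply/properP; split.
    by apply/subsetP => u; rewrite !inE negb_or => /andP [-> /andP [_ ->]].
  by exists v; rewrite !inE ?eqxx ?v_ns.
- by rewrite !inE negb_or sink_Q eq_sym v_ns.
- move=> q u; rewrite !inE => /orP [/eqP ->|q_Q] u_ns; rewrite negb_or => /andP [uv u_Q].
    by apply: v_max; rewrite u_ns u_Q.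
  exact: rank_Q.
Qed.

Lemma SR_indeg_config : SR m indeg_config.
Proof.
apply/recurrentP; split.
  split=> [|u u_ns]; first by rewrite /indeg_config eqxx.
  by rewrite /indeg_config (negbTE u_ns) indeg_lt_deg.
have -> : max_stable = partial_indeg_config set0.
  by apply: functional_extensionality => u; rewrite /max_stable /partial_indeg_config inE.
by apply: reach_indeg_config => [|q u]; rewrite inE.
Qed.

(* An SR state below it dominates another in-degree vector with the same sum. *)
Lemma minimal_SR_indeg_config : minimal_SR m indeg_config.
Proof.
split=> [|c /SR_indeg_dominated [o' o'_or o'_le] c_le]; first exact: SR_indeg_config.
have c_sink : c sink = 0 by move: (c_le sink); rewrite /indeg_config eqxx leqn0 => /eqP.
have c_eq : forall u, u != sink -> c u = indeg o u.
  apply: leq_sum_eq => [u u_ns|]; first by move: (c_le u); rewrite /indeg_config (negbTE u_ns).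
  by rewrite (sum_indeg_nonsink o_or o'_or); apply: leq_sum.
apply: functional_extensionality => u; rewrite /indeg_config.
by case: eqP => [->|/eqP u_ns]; [exact: c_sink|exact: c_eq].
Qed.

End IndegConfig.

Definition burnable (c : config n) := forall A : {set V}, sink \notin A -> A != set0 ->
  exists2 u, u \in A & \sum_(w in A) m u w <= c u.

Lemma burnable_add_grain c i : burnable c -> burnable (add_grain c i).
Proof.
move=> c_burn A sink_A A_ne; have [u u_A le_u] := c_burn A sink_A A_ne.
by exists u => //; apply: leq_trans le_u _; rewrite /add_grain; case: ifP.
Qed.

Lemma burnable_asm_topple c c' : asm_topple m c c' -> burnable c -> burnable c'.
Proof.
case=> i [i_ns deg_le ->] c_burn A sink_A A_ne.
have A_ns u : u \in A -> u != sink by apply: contraTneq => ->.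
have [i_A|i_A] := boolP (i \in A); last first.
  have [u u_A le_u] := c_burn A sink_A A_ne; exists u => //; apply: leq_trans le_u _.
  rewrite /topple_by (negbTE (A_ns _ u_A)); case: eqP => [ui|_]; last exact: leq_addr.
  by rewrite -ui u_A in i_A.
have [Ai0|Ai_ne] := eqVneq (A :\ i) set0.
  exists i => //; rewrite big1 // => w w_A; have [->//|wi] := eqVneq w i.
  by move/setP: Ai0 => /(_ w); rewrite !inE wi w_A.
have [|u] := c_burn (A :\ i) _ Ai_ne; first by rewrite !inE negb_and sink_A orbT.
rewrite !inE => /andP [ui u_A] le_u; exists u => //.
rewrite /topple_by (negbTE (A_ns _ u_A)) (negbTE ui) (big_setD1 i i_A) /=.
by rewrite addnC [m u i]m_sym leq_add2r.
Qed.

Lemma burnable_max_stable : burnable max_stable.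
Proof.
move=> A sink_A /set0Pn [a a_A].
have [u [w [u_A w_A m_uw]]] := connect_exit (m_connect a sink) a_A sink_A.
have u_ns : u != sink by apply: contraNneq sink_A => <-.
exists u => //; rewrite /max_stable (negbTE u_ns) -ltnS prednK ?deg_gt0 //.
rewrite /deg [X in _ < X](bigID (mem A)) /= -[X in X < _]addn0 ltn_add2l.
by apply: leq_trans m_uw _; rewrite (bigD1 w) //= leq_addr.
Qed.

Lemma DR_burnable c : DR m c -> burnable c.
Proof.
apply: recurrent_invariant burnable_max_stable.
  by move=> x i _; apply: burnable_add_grain.
exact: burnable_asm_topple.
Qed.

Lemma sum_orientation_in o (A : {set V}) u : orientation o ->
  \sum_(w in A) m u w = \sum_(w in A) o w u + \sum_(w in A) o u w.
Proof.
case=> o_sum o_loop _; rewrite -big_split /=; apply: eq_bigr => w _.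
have [->|wu] := eqVneq w u; first by rewrite o_loop m_loop.
by rewrite o_sum // m_sym.
Qed.

(* Such a set carries a directed cycle of [o] avoiding the sink. *)
Definition cyclic_set (o : V -> V -> nat) (C : {set V}) :=
  [/\ C != set0, sink \notin C & forall u, u \in C -> exists2 w, w \in C & 0 < o u w].

(* The vertices from which [C] can be reached have all their in-edges among
   themselves, and none of them can burn. *)
Lemma not_burnable_cyclic o C : orientation o -> cyclic_set o C ->
  ~ burnable (indeg_config o).
Proof.
move=> o_or [C_ne sink_C succ_C] c_burn.
pose A := [set v | [exists x in C, connect (fun a b => 0 < o a b) v x]].
have C_A u : u \in C -> u \in A.
  by move=> u_C; rewrite inE; apply/existsP; exists u; rewrite u_C connect0.
have sink_A : sink \notin A.
  rewrite inE; apply/existsP => [[x /andP [x_C /connectP [[|y p] /= ]]]].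
    by move=> _ x_sink; rewrite x_sink (negbTE sink_C) in x_C.
  by case: o_or => _ _ ->.
have [|u u_A] := c_burn A sink_A; first by case/set0Pn: C_ne => x /C_A x_A; apply/set0Pn; exists x.
apply/negP; rewrite -ltnNge (sum_orientation_in _ _ o_or).
have u_ns : u != sink by apply: contraNneq sink_A => <-.
have -> : indeg_config o u = \sum_(w in A) o w u.
  rewrite /indeg_config (negbTE u_ns) /indeg (bigID (mem A)) /= [X in _ + X]big1 ?addn0 //.
  move=> w w_A; apply/eqP; rewrite -leqn0 leqNgt; apply: contra w_A => o_wu.
  move: u_A; rewrite !inE => /exists_inP [x x_C u_x]; apply/exists_inP; exists x => //.
  exact: connect_trans (connect1 _) u_x.
rewrite -addn1 leq_add2l.
suff [w w_A o_uw] : exists2 w, w \in A & 0 < o u w.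
  by apply: leq_trans o_uw _; rewrite (bigD1 w) //= leq_addr.
move: u_A; rewrite inE => /exists_inP [x x_C /connectP [[|y p] /=]].
  by move=> _ <-; have [w w_C o_xw] := succ_C x x_C; exists w => //; apply: C_A.
case/andP=> o_uy y_p x_last; exists y => //; rewrite inE; apply/exists_inP; exists x => //.
by apply/connectP; exists p.
Qed.

Lemma acyclic_not_cyclic_set o C : nonsink_acyclic m -> orientation o -> ~ cyclic_set o C.
Proof.
move=> [simple no_cycle] o_or [/set0Pn [a a_C] sink_C succ_C].
pose f u := odflt u [pick w in C | 0 < o u w].
have f_C u : u \in C -> (f u \in C) && (0 < o u (f u)).
  move=> u_C; rewrite /f; case: pickP => [w /andP [-> ->] //|none].
  by have [w w_C o_uw] := succ_C u u_C; move: (none w); rewrite w_C o_uw.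
have iter_C j u : u \in C -> iter j f u \in C.
  by elim: j => [//|j IH] /IH /f_C /andP [].
have [i] := fcycle_orbit_iter f a; set y := iter i f a.
have s_C : {subset orbit f y <= C}.
  by move=> x /trajectP [j _ ->]; apply/iter_C/iter_C.
have o_f u : u \in C -> 0 < o u (f u) by case/f_C/andP.
have C_ns u : u \in C -> u != sink by apply: contraTneq => ->.
move: (orbit_uniq f y) (in_orbit f y) s_C.
case: (orbit f y) => [|y0 [|y1 [|y2 s]]] // s_uniq _ s_C cyc.
- have y0_C := s_C _ (mem_head _ _); move: cyc => /= /andP [/eqP f_y0 _].
  by have := o_f y0 y0_C; rewrite f_y0; case: o_or => _ ->.
- have y0_C := s_C _ (mem_head _ _); have y1_C : y1 \in C by apply: s_C; rewrite !inE eqxx orbT.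
  move: cyc s_uniq => /= /and3P [/eqP f_y0 /eqP f_y1 _]; rewrite !inE andbT => y0y1.
  have := simple _ _ (C_ns _ y0_C) (C_ns _ y1_C); case: o_or => o_sum _ _.
  by rewrite -o_sum //; have := o_f _ y0_C; have := o_f _ y1_C; rewrite f_y0 f_y1; lia.
- have sink_s : sink \notin [:: y0, y1, y2 & s].
    by apply/negP => /s_C; rewrite (negbTE sink_C).
  move/negP: (no_cycle _ s_uniq isT sink_s); apply.
  apply: (sub_in_cycle (P := mem C) _ _ cyc); last by apply/allP.
  by move=> u w u_C _ /eqP <-; apply: leq_trans (o_f _ u_C) (orientation_le _ _ o_or).
Qed.

Lemma indeg_dominated_burnable c : nonsink_acyclic m -> indeg_dominated c -> burnable c.
Proof.
move=> acyc [o o_or o_le] A sink_A A_ne.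
case: (boolP [exists u in A, \sum_(w in A) m u w <= c u]) => [/exists_inP [u u_A le_u]|].
  by exists u.
rewrite negb_exists_in => /forall_inP A_cold; exfalso.
apply: (acyclic_not_cyclic_set (C := A) acyc o_or); split=> // u u_A.
have u_ns : u != sink by apply: contraNneq sink_A => <-.
apply: sum_gt0_exists; move: (A_cold u u_A); rewrite -ltnNge (sum_orientation_in _ _ o_or).
have : \sum_(w in A) o w u <= c u.
  by apply: leq_trans (o_le u u_ns); rewrite /indeg [X in _ <= X](bigID (mem A)) leq_addr.
lia.
Qed.

Definition fire (x : config n) v : config n := topple_by x v (m v).

Fixpoint legal (x : config n) (s : seq V) (y : config n) : Prop :=
  if s is v :: s' then [/\ v != sink, deg v <= x v & legal (fire x v) s' y]
  else x = y.

Lemma legal_asm x s y : legal x s y -> clos_refl_trans _ (asm_topple m) x y.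
Proof.
elim: s x => [|v s IH] x /=; first by move->; apply: rt_refl.
by case=> v_ns deg_le /IH; apply: rt_trans; apply: rt_step; exists v.
Qed.

Lemma legal_cat x s1 y s2 z : legal x s1 y -> legal y s2 z -> legal x (s1 ++ s2) z.
Proof.
elim: s1 x => [|v s IH] x /=; first by move->.
by case=> v_ns deg_le /IH legal_s /legal_s.
Qed.

Lemma legal_rcons x s y v :
  legal x s y -> v != sink -> deg v <= y v -> legal x (rcons s v) (fire y v).
Proof. by move=> legal_s v_ns deg_v; rewrite -cats1; apply: legal_cat legal_s _. Qed.

Lemma legal_sink x s y : legal x s y -> x sink = 0 -> y sink = 0.
Proof.
elim: s x => [|v s IH] x /=; first by move->.
by case=> _ _ /IH legal_s _; apply: legal_s; rewrite /fire /topple_by eqxx.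
Qed.

Lemma legal_from_stable x s y : stable x -> legal x s y -> x = y.
Proof.
move=> [_ x_lt]; case: s => [//|v s [v_ns deg_le _]].
by move: (x_lt v v_ns); rewrite ltnNge deg_le.
Qed.

Lemma legal_addc x s y f : f sink = 0 -> legal x s y -> legal (addc x f) s (addc y f).
Proof.
move=> f_sink; elim: s x => [|v s IH] x /=; first by move->.
case=> v_ns deg_le /IH legal_s; split=> //; first exact: leq_trans deg_le (leq_addr _ _).
by rewrite /fire topple_by_addc.
Qed.

Lemma fire_comm x v w : v != w -> v != sink -> w != sink ->
  deg v <= x v -> deg w <= x w -> fire (fire x v) w = fire (fire x w) v.
Proof.
move=> vw v_ns w_ns deg_v deg_w; apply: functional_extensionality => u.
have wv : w != v by rewrite eq_sym.
rewrite /fire /topple_by -/(deg v) -/(deg w).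
rewrite (negbTE v_ns) (negbTE w_ns) (negbTE vw) (negbTE wv).
by case: eqP => // _; case: eqP => [->|_]; case: eqP => [->|_]; lia.
Qed.

(* Local confluence: a vertex that is ready in [x] fires at some point of any
   legal sequence from [x] to a stable configuration, so it may fire first. *)
Lemma legal_fire_first x s y v : legal x s y -> stable y -> v != sink -> deg v <= x v ->
  exists2 s', legal (fire x v) s' y & size s = (size s').+1.
Proof.
elim: s x => [|w s IH] x /=.
  by move=> -> [_ y_lt] v_ns deg_v; move: (y_lt v v_ns); rewrite ltnNge deg_v.
case=> w_ns deg_w legal_s y_st v_ns deg_v; have [<-|wv] := eqVneq w v; first by exists s.
have fire_ge u a : u != a -> u != sink -> x u <= fire x a u.
  by move=> ua u_ns; rewrite /fire /topple_by (negbTE u_ns) (negbTE ua) leq_addr.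
have vw : v != w by rewrite eq_sym.
have [s' legal_s' size_s] := IH _ legal_s y_st v_ns (leq_trans deg_v (fire_ge _ _ vw v_ns)).
exists (w :: s'); last by rewrite size_s.
split=> //; first exact: leq_trans deg_w (fire_ge _ _ wv w_ns).
by rewrite fire_comm.
Qed.

Lemma legal_confluent x s y t z : legal x s y -> stable y -> legal x t z ->
  exists2 s', legal z s' y & size s = size t + size s'.
Proof.
elim: t x s => [|v t IH] x s /=; first by move=> legal_s _ <-; exists s.
move=> legal_s y_st [v_ns deg_v legal_t].
have [s1 legal_s1 ->] := legal_fire_first legal_s y_st v_ns deg_v.
by have [s2 legal_s2 ->] := IH _ _ legal_s1 y_st legal_t; exists s2.
Qed.

(* Legal sequences from [x] are no longer than one from [addc x f] to a stable
   configuration, so firing greedily from [x] terminates. *)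
Lemma legal_stabilize x f s y : f sink = 0 -> x sink = 0 ->
  legal (addc x f) s y -> stable y -> exists t z, legal x t z /\ stable z.
Proof.
move=> f_sink x_sink legal_s y_st.
have size_le t z : legal x t z -> size t <= size s.
  by move/(legal_addc f_sink)/(legal_confluent legal_s y_st) => [s' _ ->]; apply: leq_addr.
suff [t [z [legal_t z_lt]]] : exists t z, legal x t z /\ forall u, u != sink -> z u < deg u.
  by exists t, z; split=> //; split=> //; apply: legal_sink legal_t x_sink.
suff greedy t z : legal x t z ->
    exists t z, legal x t z /\ forall u, u != sink -> z u < deg u.
  exact: (greedy [::] x).
move=> legal_t; have [k] := ubnP (size s - size t).
elim: k t z legal_t => // k IH t z legal_t; rewrite ltnS => le_k.
case: (pickP (fun u => (u != sink) && (deg u <= z u))) => [u /andP [u_ns deg_u]|z_lt].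
  have legal_tu := legal_rcons legal_t u_ns deg_u.
  have := size_le _ _ legal_tu; rewrite size_rcons => lt_t.
  by apply: IH legal_tu _; rewrite size_rcons; lia.
by exists t, z; split=> // u u_ns; move: (z_lt u); rewrite u_ns /= leqNgt => /negbFE.
Qed.

Lemma add_grain_delta x v : v != sink -> add_grain x v = addc x (delta v).
Proof.
move=> v_ns; apply: functional_extensionality => u.
by rewrite /add_grain /addc /delta v_ns andbT; case: eqP => _; rewrite ?addn1 ?addn0.
Qed.

(* Add the grains of [a] one at a time: each partial stabilisation is a chain
   step, and by confluence the rest still stabilises to [y]. *)
Lemma reach_of_legal a : a sink = 0 -> forall x s y, stable x ->
  legal (addc x a) s y -> stable y -> reach (asm_topple m) x y.
Proof.
move: a; apply: grains_ind => [|v a v_ns a_sink IH] x s y x_st legal_s y_st.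
  by move: legal_s; rewrite addc0 => /(legal_from_stable x_st) ->; apply: rt_refl.
have x'_sink : add_grain x v sink = 0 by rewrite add_grain_sink //; case: x_st.
rewrite -addcA -add_grain_delta // in legal_s.
have [t [z [legal_t z_st]]] := legal_stabilize a_sink x'_sink legal_s y_st.
apply: (@rt_trans _ _ _ z).
  by apply: rt_step; split=> //; exists v; split=> //; apply: legal_asm legal_t.
have [s' legal_s' _] := legal_confluent legal_s y_st (legal_addc a_sink legal_t).
exact: IH legal_s' y_st.
Qed.

Section Burning.
Variable c : config n.
Hypotheses (c_st : stable c) (c_burn : burnable c).

Definition burning_config : V -> nat := fun u => if u == sink then 0 else m u sink.

(* [x] is what remains of [addc c burning_config] once every vertex outside [A]
   (the sink included) has fired exactly once. *)
Lemma legal_burn (A : {set V}) x : sink \notin A -> x sink = 0 ->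
  (forall u, u != sink ->
     x u + (if u \in A then 0 else deg u) = c u + \sum_(w | w \notin A) m w u) ->
  exists s, legal x s c.
Proof.
have [k] := ubnP #|A|; elim: k A x => // k IH A x; rewrite ltnS => card_A sink_A x_sink x_eq.
have [A0|A_ne] := eqVneq A set0.
  exists [::]; apply: functional_extensionality => u.
  have [->|u_ns] := eqVneq u sink; first by rewrite x_sink; case: c_st.
  move: (x_eq u u_ns); rewrite A0 inE.
  have -> : \sum_(w | w \notin set0) m w u = deg u.
    by apply: eq_big => [w|w _]; rewrite ?inE // m_sym.
  by move/addIn.
have [u u_A le_u] := c_burn sink_A A_ne.
have u_ns : u != sink by apply: contraNneq sink_A => <-.
have x_u : x u = c u + \sum_(w | w \notin A) m w u by rewrite -x_eq // u_A addn0.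
have deg_u : deg u <= x u.
  rewrite x_u /deg (bigID (mem A)) /= leq_add //.
  by apply: eq_leq; apply: eq_bigr => w _; rewrite m_sym.
suff [s legal_s] : exists s, legal (fire x u) s c by exists (u :: s).
apply: IH.
- by apply: leq_trans card_A; rewrite (cardsD1 u A) u_A.
- by rewrite !inE negb_and sink_A orbT.
- by rewrite /fire /topple_by eqxx.
move=> v v_ns; rewrite sum_notin_setD1 // /fire /topple_by (negbTE v_ns).
have [->|vu] := eqVneq v u.
  by rewrite !inE eqxx /= m_loop add0n -x_u -/(deg u) subnK.
by rewrite !inE vu /= addnAC x_eq // -addnA [_ + m u v]addnC.
Qed.

Lemma legal_burning : exists s, legal (addc c burning_config) s c.
Proof.
apply: (@legal_burn [set u | u != sink]) => [||u u_ns]; first by rewrite inE negbK.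
  by rewrite /addc /burning_config eqxx addn0; case: c_st.
rewrite inE u_ns addn0 /addc /burning_config (negbTE u_ns) m_sym.
by rewrite (big_pred1 sink) // => w; rewrite inE negbK.
Qed.

Definition absorbed (w : V -> nat) := w sink = 0 /\ exists s, legal (addc c w) s c.

Lemma absorbed0 : absorbed (fun=> 0).
Proof. by split=> //; exists [::]; rewrite addc0. Qed.

Lemma absorbedD w1 w2 : absorbed w1 -> absorbed w2 -> absorbed (fun u => w1 u + w2 u).
Proof.
move=> [w1_sink [s1 legal_s1]] [w2_sink [s2 legal_s2]]; split; first by rewrite w1_sink w2_sink.
by exists (s1 ++ s2); rewrite -addcA; apply: legal_cat legal_s2; apply: legal_addc.
Qed.

Lemma absorbedMn k w : absorbed w -> absorbed (fun u => k * w u).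
Proof.
move=> w_abs; elim: k => [|k IH]; first exact: absorbed0.
by have := absorbedD w_abs IH; congr absorbed; apply: functional_extensionality => u; rewrite mulSn.
Qed.

Lemma absorbed_burning : absorbed burning_config.
Proof. by split; [rewrite /burning_config eqxx|exact: legal_burning]. Qed.

Lemma absorbed_fire w p : absorbed w -> p != sink -> deg p <= w p ->
  absorbed (fun u => if u == sink then 0 else if u == p then w p - deg p else w u + m p u).
Proof.
move=> [w_sink [s legal_s]] p_ns deg_p; split; first by rewrite eqxx.
have [s' legal_s' _] := legal_fire_first legal_s c_st p_ns (leq_trans deg_p (leq_addl _ _)).
exists s'; congr legal: legal_s'; apply: functional_extensionality => u.
rewrite /fire /topple_by /addc -/(deg p); have [->|u_ns] := eqVneq u sink.
  by case: c_st => ->.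
by case: eqP => [->|_]; lia.
Qed.

(* Induct on the rank: fire [parent u] in a multiple of a vector that is positive
   there. *)
Lemma absorbed_gt0 u : u != sink -> exists w, absorbed w /\ 0 < w u.
Proof.
have [r] := ubnP (rank u); elim: r u => // r IH u; rewrite ltnS => rank_u u_ns.
have /andP [m_up rank_up] := parentP u_ns; set p := parent u in m_up rank_up *.
have [p_sink|p_ns] := eqVneq p sink.
  exists burning_config; split; first exact: absorbed_burning.
  by rewrite /burning_config (negbTE u_ns) -p_sink.
have [w [w_abs w_p]] := IH p (leq_trans rank_up rank_u) p_ns.
have deg_p : deg p <= deg p * w p by rewrite leq_pmulr.
eexists; split; first exact: absorbed_fire (absorbedMn (deg p) w_abs) p_ns deg_p.
have up : u != p by apply: parent_neq.
by rewrite /= (negbTE u_ns) (negbTE up) m_sym; apply: leq_trans m_up (leq_addl _ _).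
Qed.

Lemma absorbed_dominates (tau : V -> nat) :
  exists w, absorbed w /\ forall u, u != sink -> tau u <= w u.
Proof.
suff [w [w_abs w_ge]] :
    exists w, absorbed w /\ forall u, u \in enum V -> u != sink -> tau u <= w u.
  by exists w; split=> // u; apply: w_ge; rewrite mem_enum.
elim: (enum V) => [|u r [w [w_abs w_ge]]]; first by exists (fun=> 0); split; [exact: absorbed0|].
have [u_sink|u_ns] := eqVneq u sink.
  by exists w; split=> // v; rewrite inE => /orP [/eqP ->|/w_ge //]; rewrite u_sink eqxx.
have [wu [wu_abs wu_u]] := absorbed_gt0 u_ns.
exists (fun v => w v + tau u * wu v); split; first exact: absorbedD (absorbedMn _ wu_abs).
move=> v; rewrite inE => /orP [/eqP -> _|v_r v_ns].
  by apply: leq_trans (leq_addl _ _); rewrite leq_pmulr.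
exact: leq_trans (w_ge v v_r v_ns) (leq_addr _ _).
Qed.

(* [max_stable] plus some grains equals [c] plus an absorbed vector. *)
Lemma burnable_DR : DR m c.
Proof.
apply/recurrentP; split=> //.
pose tau u := (deg u).-1 - c u.
have [w [[w_sink [s legal_s]] w_ge]] := absorbed_dominates tau.
pose a u := if u == sink then 0 else w u - tau u.
have a_eq : addc max_stable a = addc c w.
  apply: functional_extensionality => u; rewrite /addc /max_stable /a.
  have [->|u_ns] := eqVneq u sink; first by rewrite w_sink; case: c_st => ->.
  move: (w_ge u u_ns) (deg_gt0 u_ns); case: c_st => _ /(_ u u_ns); rewrite /tau; lia.
have a_sink : a sink = 0 by rewrite /a eqxx.
by apply: (reach_of_legal a_sink max_stable_stable _ c_st); rewrite a_eq; exact: legal_s.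
Qed.

End Burning.

Lemma acyclic_SR_DR : nonsink_acyclic m -> forall c, SR m c -> DR m c.
Proof.
move=> acyc c c_SR; apply: burnable_DR; first by case: c_SR.
exact/(indeg_dominated_burnable acyc)/SR_indeg_dominated.
Qed.

Definition patch (d : V -> V -> nat) (C : {set V}) a b :=
  if (a \in C) && (b \in C) then d a b else rank_orientation a b.

(* The in-degree configuration of the patched orientation is minimal SR but
   does not burn. *)
Lemma patch_not_minimal_DR d (C : {set V}) : C != set0 -> sink \notin C ->
  (forall a b, a \in C -> b \in C -> a != b -> d a b + d b a = m a b) ->
  (forall a, a \in C -> d a a = 0) ->
  (forall u, u \in C -> exists2 w, w \in C & 0 < d u w) ->
  ~ (forall c, minimal_SR m c -> DR m c).
Proof.
move=> C_ne sink_C d_sum d_loop d_succ min_DR.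
have [r_sum r_loop r_sink] := rank_orientation_orientation.
have o_or : orientation (patch d C).
  split=> [a b ab|a|a]; rewrite /patch.
  - case: (boolP (a \in C)) => a_C; case: (boolP (b \in C)) => b_C /=;
      [exact: d_sum|exact: r_sum..].
  - by case: (boolP (a \in C)) => a_C /=; [exact: d_loop|exact: r_loop].
  - by rewrite (negbTE sink_C); exact: r_sink.
have o_succ u : u \in C -> exists2 w, w \in C & 0 < patch d C u w.
  by move=> u_C; have [w w_C d_uw] := d_succ u u_C; exists w; rewrite // /patch u_C w_C.
have o_root : sink_rooted (patch d C).
  move=> u u_ns; have [u_C|u_C] := boolP (u \in C).
    have [w w_C o_uw] := o_succ u u_C.
    by apply: leq_trans o_uw _; rewrite /outdeg (bigD1 w) //= leq_addr.
  apply: leq_trans (rank_orientation_sink_rooted u_ns) _; apply: eq_leq.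
  by apply: eq_bigr => w _; rewrite /patch (negbTE u_C).
apply: (not_burnable_cyclic o_or (C := C)); first by split.
exact/DR_burnable/min_DR/minimal_SR_indeg_config.
Qed.

Lemma minimal_DR_acyclic : (forall c, minimal_SR m c -> DR m c) -> nonsink_acyclic m.
Proof.
move=> min_DR; split=> [i j i_ns j_ns|s s_uniq s_size sink_s].
  rewrite leqNgt; apply/negP => m_ij.
  have ij : i != j by apply: contraTneq m_ij => ->; rewrite m_loop.
  pose d a b := if a == b then 0 else if a == i then 1 else (m i j).-1.
  apply: (@patch_not_minimal_DR d [set i; j]) => //; rewrite /d.
  - by apply/set0Pn; exists i; rewrite !inE eqxx.
  - by rewrite !inE negb_or ![sink == _]eq_sym i_ns j_ns.
  - move=> a b; rewrite !inE => /orP [] /eqP -> /orP [] /eqP -> //; rewrite ?eqxx //.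
      by move=> _; rewrite [j == i]eq_sym (negbTE ij); lia.
    by move=> _; rewrite [j == i]eq_sym (negbTE ij) [m j i]m_sym; lia.
  - by move=> a _; rewrite eqxx.
  - move=> u; rewrite !inE => /orP [] /eqP ->; [exists j|exists i]; rewrite ?inE ?eqxx ?orbT //.
      by rewrite (negbTE ij).
    by rewrite [j == i]eq_sym (negbTE ij); lia.
apply/negP => s_cycle.
pose d a b :=
  if next s a == b then m a b else if next s b == a then 0 else rank_orientation a b.
apply: (@patch_not_minimal_DR d [set x in s]) => //.
- case: s s_size {s_uniq sink_s s_cycle d} => // x s _.
  by apply/set0Pn; exists x; rewrite inE mem_head.
- by rewrite inE.
- move=> a b; rewrite !inE => a_s b_s ab; rewrite /d.
  have [next_a|_] := eqVneq (next s a) b.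
    by rewrite -next_a (negbTE (next_next s_uniq s_size a_s)) addn0.
  have [next_b|_] := eqVneq (next s b) a; first by rewrite add0n m_sym.
  by case: rank_orientation_orientation => -> //.
- by move=> a _; rewrite /d m_loop; case: eqP => // _; case: rank_orientation_orientation.
- move=> u; rewrite inE => u_s; exists (next s u); first by rewrite inE mem_next.
  by rewrite /d eqxx; apply: next_cycle s_cycle u_s.
Qed.

End Sandpile.

Theorem proposition2p6 (n : nat) (m : 'I_n.+1 -> 'I_n.+1 -> nat) :
  is_graph m ->
  ((forall c, SR m c -> DR m c) <-> (forall c, minimal_SR m c -> DR m c)) /\
  ((forall c, minimal_SR m c -> DR m c) <-> nonsink_acyclic m).
Proof.
case=> m_sym [m_loop m_connect].
have iii_i := acyclic_SR_DR m_sym m_loop m_connect.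
have ii_iii := minimal_DR_acyclic m_sym m_loop m_connect.
split; split.
- by move=> SR_DR c [/SR_DR].
- by move=> /ii_iii /iii_i.
- exact: ii_iii.
- by move=> /iii_i SR_DR c [/SR_DR].
Qed.
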